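(* For every integer $N\ge1$ there exists $\delta_0>0$ depending only on $N$ such that the following holds. Let $U_\varphi,V_\varphi\subset\mathbb R^2$ be open with $\overline B_\infty(0,1)\subset U_\varphi\cap V_\varphi$, where $\overline B_\infty(0,1)=\{(x_1,x_2):\max(|x_1|,|x_2|)\le 1\}$, and let $\varphi:U_\varphi\to V_\varphi$ be a $C^{N+1}$ diffeomorphism onto its image with $\varphi(0)=0$, $d\varphi(0)=\mathrm{diag}(2,1/2)$, and $\sup_{U_\varphi}|\partial^\alpha\varphi|\le\delta$ for all $2\le|\alpha|\le N+1$, where $0<\delta\le\delta_0$. Let $F:[-1,1]\to\mathbb R$ be a $C^1$ function with $F(0)=0$ and $\sup|F'|\le 1$. Then there exists a function $\Phi_uF:[-1,1]\to\mathbb R$ with $\Phi_uF(0)=0$ such that $$\varphi(\mathcal G_u(F))\cap\{|x_1|\le 1\}=\mathcal G_u(\Phi_uF),$$ where for a function $H:[-1,1]\to\mathbb R$ we write $\mathcal G_u(H):=\{(x_1,x_2)\in\mathbb R^2:|x_1|\le1,\ x_2=H(x_1)\}$. *)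

From Stdlib Require Import Reals List.
From Coquelicot Require Import Coquelicot.
Open Scope R_scope.

Definition pt := (R * R)%type.

Definition partial1 (g : pt -> R) : pt -> R :=
  fun p => Derive (fun t => g (t, snd p)) (fst p).
Definition partial2 (g : pt -> R) : pt -> R :=
  fun p => Derive (fun t => g (fst p, t)) (snd p).

(* Iterated partial derivative along a word of directions
   (true = d/dx1, false = d/dx2); the order |alpha| is the length. *)
Fixpoint iter_pd (l : list bool) (g : pt -> R) : pt -> R :=
  match l with
  | nil => g
  | b :: l' => (if b then partial1 else partial2) (iter_pd l' g)
  end.

Definition Ck_scalar (k : nat) (U : pt -> Prop) (g : pt -> R) : Prop :=
  forall l : list bool, (length l <= k)%nat ->
    (forall p, U p -> continuous (iter_pd l g) p) /\
    ((length l < k)%nat -> forall p, U p ->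
        ex_derive (fun t => iter_pd l g (t, snd p)) (fst p) /\
        ex_derive (fun t => iter_pd l g (fst p, t)) (snd p)).

Definition Ck_map (k : nat) (U : pt -> Prop) (phi : pt -> pt) : Prop :=
  Ck_scalar k U (fun p => fst (phi p)) /\ Ck_scalar k U (fun p => snd (phi p)).

Definition image (phi : pt -> pt) (A : pt -> Prop) : pt -> Prop :=
  fun q => exists p, A p /\ q = phi p.

Definition Ck_diffeo_onto_image (k : nat) (U V : pt -> Prop) (phi : pt -> pt) : Prop :=
  Ck_map k U phi /\
  (forall p, U p -> V (phi p)) /\
  open (image phi U) /\
  exists psi : pt -> pt,
    Ck_map k (image phi U) psi /\
    (forall p, U p -> U (psi (phi p)) /\ psi (phi p) = p) /\
    (forall q, image phi U q -> U (psi q) /\ phi (psi q) = q).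

Definition closed_ball_inf (p : pt) : Prop :=
  Rmax (Rabs (fst p)) (Rabs (snd p)) <= 1.

Definition norm2 (v : pt) : R := sqrt (fst v ^ 2 + snd v ^ 2).

Definition iter_pd_map (l : list bool) (phi : pt -> pt) : pt -> pt :=
  fun p => (iter_pd l (fun q => fst (phi q)) p, iter_pd l (fun q => snd (phi q)) p).

Definition graph_u (H : R -> R) : pt -> Prop :=
  fun p => Rabs (fst p) <= 1 /\ snd p = H (fst p).

(* F : [-1,1] -> R is C^1 with sup_{[-1,1]} |F'| <= 1: realized by a C^1
   function G on R agreeing with F on [-1,1] (equivalent to one-sided C^1 on
   the closed interval), whose derivative is bounded by 1 on [-1,1]. *)
Definition C1_on_interval_lip1 (F : R -> R) : Prop :=
  exists G : R -> R,
    (forall x, -1 <= x <= 1 -> G x = F x) /\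
    (forall x, ex_derive G x) /\
    (forall x, continuous (Derive G) x) /\
    (forall x, -1 <= x <= 1 -> Rabs (Derive G x) <= 1).

(* Write g for the first component of phi and extend F to a C^1 map G on R.  The second
   derivatives of g are bounded by delta, so on the unit square its first partials stay within
   2 delta of (2, 0); since G is 1-Lipschitz, a t := g (t, G t) then expands distances on [-1, 1]
   by a factor at least 2 - 4 delta >= 1.  As a 0 = 0, a is a continuous increasing bijection
   from [-1, 1] onto an interval containing [-1, 1]; with T its inverse there, the image of the
   graph of F cut by the strip |x1| <= 1 is the graph of x |-> snd (phi (T x, F (T x))). *)
From Stdlib Require Import Reals Ranalysis5 Lra Lia ClassicalEpsilon.
From Coquelicot Require Import Coquelicot.
Open Scope R_scope.

Lemma MVT_Derive_interval (f : R -> R) (a b x y : R) :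
  (forall c, a <= c <= b -> ex_derive f c) -> a <= x <= b -> a <= y <= b ->
  exists c, a <= c <= b /\ f y - f x = Derive f c * (y - x).
Proof.
  intros Hf Hx Hy.
  assert (Hin : forall c, Rmin x y <= c <= Rmax x y -> a <= c <= b).
  { intros c Hc. pose proof (Rmin_glb x y a ltac:(lra) ltac:(lra)).
    pose proof (Rmax_lub x y b ltac:(lra) ltac:(lra)). lra. }
  destruct (MVT_gen f x y (Derive f)) as [c [Hc E]].
  - intros c Hc. apply Derive_correct, Hf, Hin. lra.
  - intros c Hc. apply continuity_pt_filterlim. exact (ex_derive_continuous f c (Hf c (Hin c Hc))).
  - exists c. split; [apply Hin, Hc | exact E].
Qed.

Lemma lipschitz_of_Derive_bound (f : R -> R) (M a b : R) :
  (forall c, a <= c <= b -> ex_derive f c) ->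
  (forall c, a <= c <= b -> Rabs (Derive f c) <= M) ->
  forall s t, a <= s <= b -> a <= t <= b -> Rabs (f s - f t) <= M * Rabs (s - t).
Proof.
  intros Hf HM s t Hs Ht.
  destruct (MVT_Derive_interval f a b t s Hf Ht Hs) as [c [Hc ->]].
  rewrite Rabs_mult. apply Rmult_le_compat_r; [apply Rabs_pos | apply HM, Hc].
Qed.

Lemma expanding_inverse_on_unit_interval (a : R -> R) :
  (forall t, -1 <= t <= 1 -> continuity_pt a t) -> a 0 = 0 ->
  (forall s t, -1 <= s <= 1 -> -1 <= t <= 1 -> t <= s -> s - t <= a s - a t) ->
  exists T : R -> R, forall x, -1 <= x <= 1 ->
    -1 <= T x <= 1 /\ forall t, -1 <= t <= 1 -> (a t = x <-> T x = t).
Proof.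
  intros Hcont Ha0 Hexp.
  assert (Hinj : forall s t, -1 <= s <= 1 -> -1 <= t <= 1 -> a s = a t -> s = t).
  { intros s t Hs Ht E. destruct (Rle_lt_dec s t).
    - pose proof (Hexp t s ltac:(lra) ltac:(lra) ltac:(lra)). lra.
    - pose proof (Hexp s t ltac:(lra) ltac:(lra) ltac:(lra)). lra. }
  apply (choice (fun x t => -1 <= x <= 1 ->
    -1 <= t <= 1 /\ forall t', -1 <= t' <= 1 -> (a t' = x <-> t = t'))).
  intros x. destruct (Rle_dec (-1) x); [destruct (Rle_dec x 1)|]; [|exists 0; lra..].
  assert (Hrange : a (-1) <= x <= a 1).
  { pose proof (Hexp 0 (-1) ltac:(lra) ltac:(lra) ltac:(lra)).
    pose proof (Hexp 1 0 ltac:(lra) ltac:(lra) ltac:(lra)). lra. }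
  destruct (f_interv_is_interv a (-1) 1 x ltac:(lra) Hrange Hcont) as [t [Ht Hat]].
  exists t. intros _. split; [exact Ht|].
  intros t' Ht'. split.
  - intros E. apply Hinj; [exact Ht | exact Ht' | congruence].
  - intros <-. exact Hat.
Qed.

Lemma Ck_scalar_le (j k : nat) (U : pt -> Prop) (g : pt -> R) :
  (j <= k)%nat -> Ck_scalar k U g -> Ck_scalar j U g.
Proof.
  intros Hjk Hg l Hl. destruct (Hg l ltac:(lia)) as [Hc Hd].
  split; [exact Hc|]. intros Hlj. apply Hd. lia.
Qed.

Lemma Rabs_fst_le_norm2 (v : pt) : Rabs (fst v) <= norm2 v.
Proof.
  unfold norm2. rewrite <- sqrt_Rsqr_abs. apply sqrt_le_1_alt.
  unfold Rsqr. nra.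
Qed.

Lemma closed_ball_inf_pair (x y : R) :
  -1 <= x <= 1 -> -1 <= y <= 1 -> closed_ball_inf (x, y).
Proof. intros Hx Hy. apply Rmax_lub; apply Rabs_le; simpl; lra. Qed.

Section FirstComponentAlongGraph.

Variables (U : pt -> Prop) (g : pt -> R) (d : R).
Hypothesis g_C2 : Ck_scalar 2 U g.
Hypothesis ball_sub_U : forall p, closed_ball_inf p -> U p.
Hypothesis second_pd_le :
  forall l, length l = 2%nat -> forall p, U p -> Rabs (iter_pd l g p) <= d.

Lemma ex_derive_pd_ball (l : list bool) (x y : R) :
  (length l < 2)%nat -> -1 <= x <= 1 -> -1 <= y <= 1 ->
  ex_derive (fun t => iter_pd l g (t, y)) x /\ ex_derive (fun t => iter_pd l g (x, t)) y.
Proof.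
  intros Hl Hx Hy. destruct (g_C2 l ltac:(lia)) as [_ Hd].
  exact (Hd Hl (x, y) (ball_sub_U _ (closed_ball_inf_pair x y Hx Hy))).
Qed.

Lemma first_pd_near_origin (b : bool) (x y : R) :
  -1 <= x <= 1 -> -1 <= y <= 1 ->
  Rabs (iter_pd (b :: nil) g (x, y) - iter_pd (b :: nil) g (0, 0)) <= 2 * d.
Proof.
  intros Hx Hy. set (P := iter_pd (b :: nil) g).
  assert (Hunit : -1 <= 0 <= 1) by lra.
  assert (Hb : (length (b :: nil) < 2)%nat) by (simpl; lia).
  destruct (MVT_Derive_interval (fun t => P (t, y)) (-1) 1 0 x) as [c [Hc E1]];
    [intros c Hc; exact (proj1 (ex_derive_pd_ball _ c y Hb Hc Hy)) | lra | exact Hx |].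
  destruct (MVT_Derive_interval (fun t => P (0, t)) (-1) 1 0 y) as [c' [Hc' E2]];
    [intros c' Hc'; exact (proj2 (ex_derive_pd_ball _ 0 c' Hb Hunit Hc')) | lra | exact Hy |].
  assert (B1 : Rabs (Derive (fun t => P (t, y)) c) <= d)
    by exact (second_pd_le (true :: b :: nil) eq_refl (c, y)
                (ball_sub_U _ (closed_ball_inf_pair c y Hc Hy))).
  assert (B2 : Rabs (Derive (fun t => P (0, t)) c') <= d)
    by exact (second_pd_le (false :: b :: nil) eq_refl (0, c')
                (ball_sub_U _ (closed_ball_inf_pair 0 c' Hunit Hc'))).
  replace (P (x, y) - P (0, 0)) with ((P (x, y) - P (0, y)) + (P (0, y) - P (0, 0))) by ring.
  simpl in E1, E2. rewrite E1, E2.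
  apply Rabs_le_between in B1, B2. apply Rabs_le. nra.
Qed.

Lemma increment_along_graph (G : R -> R) :
  (forall x, -1 <= x <= 1 -> -1 <= G x <= 1) ->
  forall s t, -1 <= s <= 1 -> -1 <= t <= 1 ->
  exists A B, Rabs (A - partial1 g (0, 0)) <= 2 * d /\ Rabs (B - partial2 g (0, 0)) <= 2 * d /\
    g (s, G s) - g (t, G t) = A * (s - t) + B * (G s - G t).
Proof.
  intros HG s t Hs Ht.
  assert (Hnil : (length (@nil bool) < 2)%nat) by (simpl; lia).
  destruct (MVT_Derive_interval (fun x => g (x, G s)) (-1) 1 t s) as [c [Hc E1]];
    [intros c Hc; exact (proj1 (ex_derive_pd_ball nil c (G s) Hnil Hc (HG s Hs))) | exact Ht | exact Hs |].
  destruct (MVT_Derive_interval (fun y => g (t, y)) (-1) 1 (G t) (G s)) as [c' [Hc' E2]];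
    [intros c' Hc'; exact (proj2 (ex_derive_pd_ball nil t c' Hnil Ht Hc')) | auto | auto |].
  exists (partial1 g (c, G s)), (partial2 g (t, c')). split; [|split].
  - exact (first_pd_near_origin true c (G s) Hc (HG s Hs)).
  - exact (first_pd_near_origin false t c' Ht Hc').
  - replace (g (s, G s) - g (t, G t))
      with ((g (s, G s) - g (t, G s)) + (g (t, G s) - g (t, G t))) by ring.
    rewrite E1, E2. reflexivity.
Qed.

Lemma expanding_along_graph (G : R -> R) :
  partial1 g (0, 0) = 2 -> partial2 g (0, 0) = 0 ->
  (forall x, -1 <= x <= 1 -> -1 <= G x <= 1) ->
  (forall s t, -1 <= s <= 1 -> -1 <= t <= 1 -> Rabs (G s - G t) <= Rabs (s - t)) ->
  forall s t, -1 <= s <= 1 -> -1 <= t <= 1 -> t <= s ->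
    (2 - 4 * d) * (s - t) <= g (s, G s) - g (t, G t).
Proof.
  intros H1 H2 HG HGlip s t Hs Ht Hts.
  destruct (increment_along_graph G HG s t ltac:(lra) ltac:(lra)) as [A [B [HA [HB ->]]]].
  rewrite H1 in HA. rewrite H2, Rminus_0_r in HB.
  specialize (HGlip s t ltac:(lra) ltac:(lra)). rewrite (Rabs_pos_eq (s - t)) in HGlip by lra.
  apply Rabs_le_between in HA, HB, HGlip. nra.
Qed.

Lemma continuity_along_graph (G : R -> R) :
  (forall x, continuous G x) -> (forall x, -1 <= x <= 1 -> -1 <= G x <= 1) ->
  forall t, -1 <= t <= 1 -> continuity_pt (fun t => g (t, G t)) t.
Proof.
  intros HGc HG t Ht. apply continuity_pt_filterlim.
  apply (continuous_comp_2 (fun t => t) G (fun x y => g (x, y)));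
    [apply continuous_id | apply HGc |].
  apply (continuous_ext g); [intros [x y]; reflexivity|].
  destruct (g_C2 nil ltac:(simpl; lia)) as [Hc _].
  exact (Hc _ (ball_sub_U _ (closed_ball_inf_pair t (G t) Ht (HG t Ht)))).
Qed.

End FirstComponentAlongGraph.

Lemma C1_on_interval_lip1_extension (F : R -> R) :
  C1_on_interval_lip1 F -> F 0 = 0 ->
  exists G : R -> R, (forall x, -1 <= x <= 1 -> G x = F x) /\ (forall x, continuous G x) /\
    (forall x, -1 <= x <= 1 -> -1 <= G x <= 1) /\
    (forall s t, -1 <= s <= 1 -> -1 <= t <= 1 -> Rabs (G s - G t) <= Rabs (s - t)).
Proof.
  intros [G [HGF [HGd [_ HGb]]]] HF0.
  assert (HGlip : forall s t, -1 <= s <= 1 -> -1 <= t <= 1 -> Rabs (G s - G t) <= Rabs (s - t)).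
  { intros s t Hs Ht. rewrite <- (Rmult_1_l (Rabs (s - t))).
    exact (lipschitz_of_Derive_bound G 1 (-1) 1 (fun c _ => HGd c) HGb s t Hs Ht). }
  exists G. split; [exact HGF|]. split; [intros x; exact (ex_derive_continuous G x (HGd x))|].
  split; [|exact HGlip].
  intros x Hx. specialize (HGlip x 0 Hx ltac:(lra)).
  rewrite (HGF 0), HF0, !Rminus_0_r in HGlip by lra. apply Rabs_le_between.
  eapply Rle_trans; [exact HGlip | apply Rabs_le; lra].
Qed.

Lemma image_graph_u_of_inverse (phi : pt -> pt) (F T : R -> R) :
  (forall x, -1 <= x <= 1 ->
     -1 <= T x <= 1 /\ forall t, -1 <= t <= 1 -> (fst (phi (t, F t)) = x <-> T x = t)) ->
  forall q, (image phi (graph_u F) q /\ Rabs (fst q) <= 1) <->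
            graph_u (fun x => snd (phi (T x, F (T x)))) q.
Proof.
  intros HT [q1 q2]. unfold graph_u, image; simpl. split.
  - intros [[[p1 p2] [[Hp1 Hp2] Eq]] Hq1]. simpl in Hp1, Hp2. subst p2.
    apply Rabs_le_between in Hp1. split; [exact Hq1|].
    apply Rabs_le_between in Hq1. destruct (HT q1 Hq1) as [_ HTq].
    replace (T q1) with p1 by (symmetry; apply HTq; [exact Hp1 | rewrite <- Eq; reflexivity]).
    rewrite <- Eq. reflexivity.
  - intros [Hq1 ->]. split; [|exact Hq1].
    apply Rabs_le_between in Hq1. destruct (HT q1 Hq1) as [HTi HTq].
    exists (T q1, F (T q1)). split; [split; [apply Rabs_le, HTi | reflexivity]|].
    apply injective_projections; [symmetry; apply HTq; [exact HTi | reflexivity] | reflexivity].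
Qed.

Theorem lemma2p2 :
  forall N : nat, (1 <= N)%nat ->
  exists delta0 : R, 0 < delta0 /\
  forall (U V : pt -> Prop) (phi : pt -> pt) (delta : R),
    open U -> open V ->
    (forall p, closed_ball_inf p -> U p /\ V p) ->
    Ck_diffeo_onto_image (S N) U V phi ->
    phi (0, 0) = (0, 0) ->
    partial1 (fun q => fst (phi q)) (0, 0) = 2 ->
    partial2 (fun q => fst (phi q)) (0, 0) = 0 ->
    partial1 (fun q => snd (phi q)) (0, 0) = 0 ->
    partial2 (fun q => snd (phi q)) (0, 0) = 1 / 2 ->
    0 < delta -> delta <= delta0 ->
    (forall l : list bool, (2 <= length l <= S N)%nat ->
       forall p, U p -> norm2 (iter_pd_map l phi p) <= delta) ->
    forall F : R -> R,
      C1_on_interval_lip1 F -> F 0 = 0 ->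
      exists PhiF : R -> R,
        PhiF 0 = 0 /\
        forall q : pt,
          (image phi (graph_u F) q /\ Rabs (fst q) <= 1) <-> graph_u PhiF q.
Proof.
  intros N HN. exists (1 / 4). split; [lra|].
  intros U V phi delta _ _ Hball [[Hg _] _] H0 Hd11 Hd12 _ _ Hdelta Hdelta0 Hder F HF HF0.
  destruct (C1_on_interval_lip1_extension F HF HF0) as [G [HGF [HGc [HGI HGlip]]]].
  set (g := fun q => fst (phi q)) in *.
  assert (Hg2 : Ck_scalar 2 U g) by (apply (Ck_scalar_le 2 (S N)); [lia | exact Hg]).
  assert (HU : forall p, closed_ball_inf p -> U p) by (intros p Hp; apply Hball, Hp).
  assert (Hd2 : forall l, length l = 2%nat -> forall p, U p -> Rabs (iter_pd l g p) <= delta)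
    by (intros l Hl p Hp; eapply Rle_trans;
        [apply (Rabs_fst_le_norm2 (iter_pd_map l phi p)) | apply Hder; [lia | exact Hp]]).
  destruct (expanding_inverse_on_unit_interval (fun t => g (t, G t))) as [T HT].
  - exact (continuity_along_graph U g Hg2 HU G HGc HGI).
  - unfold g. rewrite HGF, HF0, H0 by lra. reflexivity.
  - intros s t Hs Ht Hts.
    pose proof (expanding_along_graph U g delta Hg2 HU Hd2 G Hd11 Hd12 HGI HGlip s t Hs Ht Hts).
    nra.
  - assert (HTF : forall x, -1 <= x <= 1 ->
      -1 <= T x <= 1 /\ forall t, -1 <= t <= 1 -> (fst (phi (t, F t)) = x <-> T x = t)).
    { intros x Hx. destruct (HT x Hx) as [HTx HTinv]. split; [exact HTx|].
      intros t Ht. rewrite <- HGF by exact Ht. exact (HTinv t Ht). }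
    exists (fun x => snd (phi (T x, F (T x)))). split.
    + destruct (HTF 0 ltac:(lra)) as [_ HT0].
      rewrite (proj1 (HT0 0 ltac:(lra))) by (rewrite HF0, H0; reflexivity).
      rewrite HF0, H0. reflexivity.
    + exact (image_graph_u_of_inverse phi F T HTF).
Qed.
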